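(* Assume that the graph Laplacian $\mathbf{L}$ has precisely $r\le n$ distinct eigenvalues. Then $\mathcal{A}_{\mathbf{L}}$ is an $r$-dimensional subalgebra of the algebra $(\mathcal{L}(G),+,\ast)$. A signal $x\in\mathcal{L}(G)$ is contained in $\mathcal{A}_{\mathbf{L}}$ if and only if $\hat{x}_k=\hat{x}_{k'}$ whenever $\lambda_k=\lambda_{k'}$. Furthermore, $$\mathcal{A}_{\mathbf{L}}=\mathrm{span}\{f_{\mathbb{1}},\mathbf{L}f_{\mathbb{1}},\ldots,\mathbf{L}^{r-1}f_{\mathbb{1}}\}.$$
   Context: Let $G$ be a graph with vertex set $V=\{v_1,\dots,v_n\}$ and a symmetric, entrywise non-negative weighted adjacency matrix $\mathbf{A}\in\mathbb{R}^{n\times n}$. The degree matrix $\mathbf{D}$ is diagonal with $\mathbf{D}_{ii}=\sum_k\mathbf{A}_{ik}$ (assumed positive), and the normalized graph Laplacian is $\mathbf{L}=\mathbf{I}_n-\mathbf{D}^{-1/2}\mathbf{A}\mathbf{D}^{-1/2}$. Signals $x:V\to\mathbb{R}$ are identified with vectors in $\mathbb{R}^n$; $\mathcal{L}(G)$ denotes this space. Fix an orthonormal eigendecomposition $\mathbf{L}=\mathbf{U}\,\mathrm{diag}(\lambda_1,\dots,\lambda_n)\,\mathbf{U}^\intercal$ with $\lambda_1\le\dots\le\lambda_n$, where the columns $u_1,\dots,u_n$ of the orthogonal matrix $\mathbf{U}$ are eigenvectors. The graph Fourier transform is $\hat{x}=\mathbf{U}^\intercal x$, i.e. $\hat{x}_k=u_k^\intercal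 x$. The graph convolution is $x\ast y=\mathbf{U}\,\mathrm{diag}(\hat{x})\,\mathbf{U}^\intercal y$; it makes $\mathcal{L}(G)$ a commutative associative algebra with unit $f_{\mathbb{1}}=\sum_{k=1}^n u_k$. Define $\mathcal{A}_{\mathbf{L}}=\mathrm{span}\{f_{\mathbb{1}},\mathbf{L}f_{\mathbb{1}},\mathbf{L}^2 f_{\mathbb{1}},\dots,\mathbf{L}^{n-1}f_{\mathbb{1}}\}$. *)

(* Real scalars generalized to any real closed field R. *)
From HB Require Import structures.
From mathcomp Require Import all_boot all_order all_algebra.
Set Implicit Arguments. Unset Strict Implicit. Unset Printing Implicit Defensive.
Import Order.TTheory GRing.Theory Num.Theory.
Local Open Scope ring_scope.

Section GraphSignal.
Variables (R : rcfType) (n : nat).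

Definition degree (A : 'M[R]_n) (i : 'I_n) : R := \sum_(k < n) A i k.

Definition deg_invsqrt (A : 'M[R]_n) : 'M[R]_n :=
  diag_mx (\row_i (Num.sqrt (degree A i))^-1).

Definition normLap (A : 'M[R]_n) : 'M[R]_n :=
  1%:M - deg_invsqrt A *m A *m deg_invsqrt A.

Definition gft (U : 'M[R]_n) (x : 'cV[R]_n) : 'cV[R]_n := U^T *m x.

Definition gconv (U : 'M[R]_n) (x y : 'cV[R]_n) : 'cV[R]_n :=
  U *m diag_mx (gft U x)^T *m U^T *m y.

Definition f_one (U : 'M[R]_n) : 'cV[R]_n := \sum_(k < n) col k U.

Definition krylov (L U : 'M[R]_n) (m : nat) : {vspace 'cV[R]_n} :=
  <<[seq L ^+ i *m f_one U | i <- iota 0 m]>>%VS.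

Definition A_L (L U : 'M[R]_n) : {vspace 'cV[R]_n} := krylov L U n.

Definition n_distinct (lam : 'I_n -> R) : nat := size (undup [seq lam k | k <- enum 'I_n]).

End GraphSignal.

(* Since L^i f_1 = U (lam_k^i)_k, a signal lies in span{L^i f_1 | i < m} iff
   its Fourier transform is (p(lam_k))_k for a polynomial p of degree < m.
   Such transforms are constant on eigenvalue classes, and conversely
   interpolation through the r distinct eigenvalues realises every
   class-constant transform with degree < r.  A polynomial of degree < r
   vanishing at r points is zero, so the first r Krylov vectors are free.
   The transform turns convolution into the pointwise product, which
   preserves class-constancy. *)
From HB Require Import structures.
From mathcomp Require Import all_boot all_order all_algebra.
Set Implicit Arguments. Unset Strict Implicit. Unset Printing Implicit Defensive.
Import Order.TTheory GRing.Theory Num.Theory.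
Local Open Scope ring_scope.

Lemma Vandermonde_unitmx (F : fieldType) (s : seq F) :
  uniq s -> Vandermonde (size s) (\row_(j < size s) s`_j) \in unitmx.
Proof.
move=> s_uniq; rewrite unitmxE det_Vandermonde unitfE.
apply/prodf_neq0 => i _; apply/prodf_neq0 => j lt_ij.
by rewrite !mxE subr_eq0 nth_uniq // neq_ltn lt_ij orbT.
Qed.

Lemma poly_interpolation (F : fieldType) (s : seq F) (g : F -> F) :
  uniq s ->
  exists2 p : {poly F}, (size p <= size s)%N & {in s, forall t, p.[t] = g t}.
Proof.
move=> s_uniq; set m := size s.
pose V := Vandermonde m (\row_(j < m) s`_j).
pose c := \row_(j < m) g s`_j *m invmx V.
have cV : c *m V = \row_(j < m) g s`_j.
  by rewrite mulmxKV // Vandermonde_unitmx.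
exists (rVpoly c); first exact: size_poly.
move=> t t_s; have j_lt : (index t s < m)%N by rewrite index_mem.
have <- : s`_(Ordinal j_lt) = t by rewrite nth_index.
rewrite (horner_coef_wide _ (size_poly _ _)).
transitivity ((c *m V) 0 (Ordinal j_lt)); last by rewrite cV mxE.
by rewrite mxE; apply: eq_bigr => i _; rewrite coef_rVpoly_ord !mxE.
Qed.

Section Eigenvalues.
Variables (R : rcfType) (n : nat) (lam : 'I_n -> R).

Definition eigenvalues : seq R := undup [seq lam k | k <- enum 'I_n].

Definition eigenclass_constant (c : 'cV[R]_n) : Prop :=
  forall k k', lam k = lam k' -> c k 0 = c k' 0.

Lemma eigenvalues_uniq : uniq eigenvalues.
Proof. exact: undup_uniq. Qed.

Lemma mem_eigenvalues k : lam k \in eigenvalues.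
Proof. by rewrite mem_undup map_f ?mem_enum. Qed.

Lemma n_distinct_le : (n_distinct lam <= n)%N.
Proof.
by rewrite /n_distinct (leq_trans (size_undup _)) // size_map size_enum_ord.
Qed.

End Eigenvalues.

Section SpectralGraphSignals.
Variables (R : rcfType) (n : nat) (U L : 'M[R]_n) (lam : 'I_n -> R).
Hypothesis U_orthogonal : U^T *m U = 1%:M.
Hypothesis L_spectral : L = U *m diag_mx (\row_k lam k) *m U^T.

Lemma f_oneE : f_one U = U *m const_mx 1.
Proof.
apply/matrixP => a b; rewrite !mxE summxE; apply: eq_bigr => k _.
by rewrite !mxE mulr1.
Qed.

Lemma gftK : cancel (gft U) (mulmx U).
Proof. by move=> x; rewrite /gft mulmxA (mulmx1C U_orthogonal) mul1mx. Qed.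

Lemma gft_f_one : gft U (f_one U) = const_mx 1.
Proof. by rewrite /gft f_oneE mulmxA U_orthogonal mul1mx. Qed.

Lemma gft_gconv x y k : gft U (gconv U x y) k 0 = gft U x k 0 * gft U y k 0.
Proof.
rewrite /gconv {1}/gft !mulmxA U_orthogonal mul1mx -mulmxA mul_diag_mx.
by rewrite !mxE.
Qed.

Lemma gft_mulL y : gft U (L *m y) = diag_mx (\row_k lam k) *m gft U y.
Proof. by rewrite L_spectral /gft !mulmxA U_orthogonal mul1mx. Qed.

Lemma gft_expL_f_one i : gft U (L ^+ i *m f_one U) = \col_k lam k ^+ i.
Proof.
elim: i => [|i IH].
  by rewrite mul1mx gft_f_one; apply/colP => k; rewrite !mxE.
rewrite exprS -mulmxE -mulmxA gft_mulL IH mul_diag_mx.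
by apply/colP => k; rewrite !mxE exprS.
Qed.

Lemma gft_krylov_comb m (c : 'rV_m) k :
  gft U (\sum_(i < m) c 0 i *: (L ^+ i *m f_one U)) k 0 = (rVpoly c).[lam k].
Proof.
rewrite /gft mulmx_sumr summxE (horner_coef_wide _ (size_poly _ _)).
apply: eq_bigr => i _.
by rewrite -scalemxAr -/(gft U _) gft_expL_f_one coef_rVpoly_ord !mxE mulrC.
Qed.

Definition krylov_tuple m : m.-tuple 'cV[R]_n :=
  map_tuple (fun i => L ^+ i *m f_one U) (iota_tuple m 0).

Lemma nth_krylov_tuple m (i : 'I_m) : (krylov_tuple m)`_i = L ^+ i *m f_one U.
Proof. by rewrite (nth_map 0%N) ?nth_iota ?size_iota. Qed.

Lemma krylov_vec_mem m i : (i < m)%N -> L ^+ i *m f_one U \in krylov L U m.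
Proof. by move=> lt_im; apply: memv_span; apply: map_f; rewrite mem_iota. Qed.

Lemma mem_krylovP m x :
  x \in krylov L U m <->
  exists2 p : {poly R}, (size p <= m)%N & forall k, gft U x k 0 = p.[lam k].
Proof.
split=> [x_kry | [p size_p gft_x]].
  pose c := \row_(i < m) coord (krylov_tuple m) i x.
  exists (rVpoly c); first exact: size_poly.
  move=> k; rewrite -gft_krylov_comb.
  rewrite {1}(coord_span (X := krylov_tuple m) x_kry).
  by congr (gft U _ k 0); apply: eq_bigr => i _; rewrite nth_krylov_tuple mxE.
have -> : x = \sum_(i < m) (poly_rV p) 0 i *: (L ^+ i *m f_one U).
  apply: (can_inj gftK); apply/colP => k.
  by rewrite gft_krylov_comb poly_rV_K // gft_x.
by apply: rpred_sum => i _; apply: rpredZ; exact: krylov_vec_mem.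
Qed.

Lemma mem_krylov_eigenclass_constant m x : (n_distinct lam <= m)%N ->
  x \in krylov L U m <-> eigenclass_constant lam (gft U x).
Proof.
move=> le_rm; split=> [/mem_krylovP [p _ gft_x] k k' eq_lam | x_const].
  by rewrite !gft_x eq_lam.
pose g t := if [pick k | lam k == t] is Some k then gft U x k 0 else 0.
have [p size_p p_g] := poly_interpolation g (eigenvalues_uniq lam).
apply/mem_krylovP; exists p; first by rewrite (leq_trans size_p).
move=> k; rewrite p_g ?mem_eigenvalues // /g.
by case: pickP => [k' /eqP/x_const -> //|/(_ k)]; rewrite eqxx.
Qed.

Lemma dim_krylov m : (m <= n_distinct lam)%N -> \dim (krylov L U m) = m.
Proof.
move=> le_mr; rewrite -[RHS](size_tuple (krylov_tuple m)).
apply/eqP/freeP => c comb_0 i; pose p := rVpoly (\row_j c j).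
have p_root k : root p (lam k).
  apply/eqP; rewrite -gft_krylov_comb.
  transitivity (gft U 0 k 0); last by rewrite /gft mulmx0 mxE.
  rewrite -[in RHS]comb_0; congr (gft U _ k 0).
  by apply: eq_bigr => j _; rewrite nth_krylov_tuple mxE.
have p_0 : p = 0.
  apply: (roots_geq_poly_eq0 _ (eigenvalues_uniq lam)).
    by apply/allP => t; rewrite mem_undup => /mapP [k _ ->].
  exact: leq_trans (size_poly _ _) le_mr.
have -> : c i = (\row_j c j) 0 i by rewrite mxE.
by rewrite -coef_rVpoly_ord -/p p_0 coef0.
Qed.

End SpectralGraphSignals.

Theorem proposition1 (R : rcfType) (n : nat) (A : 'M[R]_n)
  (U : 'M[R]_n) (lam : 'I_n -> R) (r : nat) :
  A^T = A ->
  (forall i j, 0 <= A i j) ->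
  (forall i, 0 < degree A i) ->
  U^T *m U = 1%:M ->
  normLap A = U *m diag_mx (\row_k lam k) *m U^T ->
  (forall k k' : 'I_n, (k <= k')%N -> lam k <= lam k') ->
  n_distinct lam = r ->
  [/\ (f_one U \in A_L (normLap A) U /\
       {in A_L (normLap A) U &, forall x y, gconv U x y \in A_L (normLap A) U}),
      \dim (A_L (normLap A) U) = r,
      (forall x : 'cV[R]_n, x \in A_L (normLap A) U <->
         (forall k k' : 'I_n, lam k = lam k' -> gft U x k 0 = gft U x k' 0))
    & A_L (normLap A) U = krylov (normLap A) U r].
Proof.
move=> _ _ _ U_orth L_spec _ <-.
have memA x := mem_krylov_eigenclass_constant U_orth L_spec x (n_distinct_le _).
have memK x := mem_krylov_eigenclass_constant U_orth L_spec x (leqnn _).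
have A_L_krylov : A_L (normLap A) U = krylov (normLap A) U (n_distinct lam).
  apply/vspaceP => x; apply/idP/idP => [/memA x_const | /memK x_const].
    by apply/memK.
  by apply/memA.
split=> //.
- split.
    by apply/memA => k k' _; rewrite (gft_f_one U_orth) !mxE.
  move=> x y /memA x_const /memA y_const; apply/memA => k k' eq_lam.
  by rewrite !(gft_gconv U_orth) (x_const _ _ eq_lam) (y_const _ _ eq_lam).
- by rewrite A_L_krylov (dim_krylov U_orth L_spec).
Qed.
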